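(* Let $\ell\ge1$ and let $G$ be a finite subgraph of the $\mathbb{Z}^\ell$ lattice. Then $\tilde{H}_k(\operatorname{ind}(G);\mathbf{k})=0$ for all $k<\frac{|V(G)|}{2\ell+1}-1$.
   Context: $\mathbf{k}$ is a fixed field. The $\mathbb{Z}^\ell$ lattice is the infinite graph whose vertices are the integer points of $\mathbb{R}^\ell$, two being adjacent when at Euclidean distance $1$. $\operatorname{ind}(G)$ is the simplicial complex on $V(G)$ whose faces are the independent sets of $G$, and $\tilde H_k$ is reduced simplicial homology with coefficients in $\mathbf{k}$. *)

From HB Require Import structures.
From mathcomp Require Import all_boot all_order all_algebra.
Set Implicit Arguments. Unset Strict Implicit. Unset Printing Implicit Defensive.
Import Order.TTheory GRing.Theory Num.Theory.
Local Open Scope ring_scope.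

(* Two integer points of Z^l are adjacent in the Z^l lattice iff their
   Euclidean distance is 1, i.e. the sum of squared coordinate differences is 1. *)
Definition lattice_adj (l : nat) (a b : 'rV[int]_l) : bool :=
  (\sum_(i < l) (a 0 i - b 0 i) ^+ 2) == 1.

Section IndComplex.
Variables (F : fieldType) (T : finType) (e : rel T).

(* Faces of ind(G): independent sets of G (the empty set included). *)
Definition independent (A : {set T}) : bool :=
  [forall x in A, forall y in A, ~~ e x y].

(* A is a face of dimension k (i.e. with k+1 vertices); the empty face has dimension -1. *)
Definition face_dim (k : int) (A : {set T}) : bool :=
  independent A && (#|A|%:Z == k + 1).

Definition chain (k : int) (f : {ffun {set T} -> F}) : Prop :=
  forall A, ~~ face_dim k A -> f A = 0.

(* Orientation sign given by the fixed total order enum_rank on vertices: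
   the coefficient of A in the boundary of A ∪ {v} is (-1)^#{u in A | u < v}. *)
Definition bsign (A : {set T}) (v : T) : F :=
  (-1) ^+ #|[set u in A | (enum_rank u < enum_rank v)%N]|.

(* Augmented simplicial boundary map:
   d [v_0 < ... < v_n] = sum_i (-1)^i [v_0 .. ^v_i .. v_n],  d [v] = [emptyset]. *)
Definition boundary (f : {ffun {set T} -> F}) : {ffun {set T} -> F} :=
  [ffun A => \sum_(v in ~: A) bsign A v * f (v |: A)].

Definition reduced_homology_vanishes (k : int) : Prop :=
  forall z, chain k z -> boundary z = 0 ->
    exists c, chain (k + 1) c /\ boundary c = z.

End IndComplex.

(* Deleting a vertex w: if H~_k(ind(G - w)) = 0 and H~_(k-1)(ind(G - N[w])) = 0, then
   H~_k(ind(G)) = 0, because the link of w in ind(G) is ind(G - N[w]); and if G has an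
   isolated vertex, ind(G) is a cone. For a lattice graph take the vertex u maximising the
   weight sum_i (l - i) x_i; its neighbours are among the u - e_j. Delete them in increasing
   order of j: when u - e_t is deleted, the vertices lost in the link lie in
   N[u - e_t] together with the earlier u - e_j, j < t, and these are at most 2l + 1 vertices,
   because the points u - e_t + e_j with j < t would outweigh u. Once they are gone u is
   isolated. Induction on k then gives H~_k = 0 as soon as (k + 1)(2l + 1) < |V(G)|. *)

From HB Require Import structures.
From mathcomp Require Import all_boot all_order all_algebra.
From mathcomp Require Import zify.
Import Order.TTheory GRing.Theory Num.Theory.
Local Open Scope ring_scope.

Set Implicit Arguments. Unset Strict Implicit. Unset Printing Implicit Defensive.

Section Chains.
Variables (F : fieldType) (T : finType).
Implicit Types (A B : {set T}) (v w : T) (c z : {ffun {set T} -> F}).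

Local Notation bsign := (@bsign F T).
Local Notation boundary := (@boundary F T).

Lemma bsign_sqr A v : bsign A v * bsign A v = 1.
Proof. by rewrite /bsign -exprD -signr_odd oddD addbb. Qed.

Lemma bsign_neq0 A v : bsign A v != 0.
Proof. by rewrite /bsign signr_eq0. Qed.

Lemma bsignU1 w B v : w \notin B ->
  bsign (w |: B) v = (if (enum_rank w < enum_rank v)%N then -1 else 1) * bsign B v.
Proof.
move=> wB; rewrite /bsign.
set L := [set u in w |: B | _]; set L' := [set u in B | _].
have LL' : L = if (enum_rank w < enum_rank v)%N then w |: L' else L'.
  apply/setP => x; case: ifP => wv; rewrite !inE;
  by case: (eqVneq x w) => [->|] /=; rewrite ?wv ?(negbTE wB).
rewrite LL'; case: ifP => _; last by rewrite mul1r.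
by rewrite cardsU1 inE (negbTE wB) exprS.
Qed.

Lemma bsign_swap w v B : w \notin B -> v \notin B -> v != w ->
  bsign (w |: B) v * bsign (v |: B) w = - (bsign B v * bsign B w).
Proof.
move=> wB vB vw; rewrite !bsignU1 //.
case: (ltngtP (enum_rank w) (enum_rank v)) => [||/val_inj/enum_rank_inj wv].
- by rewrite mulN1r mul1r mulNr mulrC.
- by rewrite mulN1r mul1r mulrN mulrC.
- by rewrite wv eqxx in vw.
Qed.

Lemma boundaryD c z : boundary (c + z) = boundary c + boundary z.
Proof.
by apply/ffunP=> A; rewrite !ffunE -big_split; apply: eq_bigr => v _; rewrite ffunE mulrDr.
Qed.

Lemma boundaryN c : boundary (- c) = - boundary c.
Proof.
by apply/ffunP=> A; rewrite !ffunE -sumrN; apply: eq_bigr => v _; rewrite ffunE mulrN.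
Qed.

Lemma boundary0 : boundary 0 = 0.
Proof. by apply/ffunP=> A; rewrite !ffunE big1 // => v _; rewrite ffunE mulr0. Qed.

(* The cone with apex [w] over [c], signed so that its boundary gives back [c]
   (see [boundary_join]). *)
Definition join w c : {ffun {set T} -> F} :=
  [ffun A : {set T} => if w \in A then bsign (A :\ w) w * c (A :\ w) else 0].

Definition deletion w z : {ffun {set T} -> F} :=
  [ffun A : {set T} => if w \in A then 0 else z A].

Definition link w z : {ffun {set T} -> F} :=
  [ffun B : {set T} => if w \in B then 0 else bsign B w * z (w |: B)].

Lemma join0 w : join w 0 = 0.
Proof. by apply/ffunP=> A; rewrite !ffunE; case: ifP; rewrite ?ffunE ?mulr0. Qed.

Lemma boundary_join w c : (forall A, w \in A -> c A = 0) ->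
  boundary (join w c) = c - join w (boundary c).
Proof.
move=> cw0; apply/ffunP=> A; rewrite !ffunE.
case: (boolP (w \in A)) => wA; last first.
  rewrite (bigD1 w) ?inE //= big1 => [|v /andP[_ vw]]; last first.
    by rewrite !ffunE !inE (negbTE wA) eq_sym (negbTE vw) mulr0.
  by rewrite !ffunE setU11 setU1K // mulrA bsign_sqr mul1r addr0 subr0.
rewrite cw0 // sub0r; set B := A :\ w.
have AB : A = w |: B by rewrite setD1K.
have wB : w \notin B by rewrite !inE eqxx.
rewrite -mulrN -sumrN mulr_sumr (big_mkcond (fun v => v \in ~: A)).
rewrite (big_mkcond (fun v => v \in ~: B)); apply: eq_bigr => v _; rewrite !inE.
case: (eqVneq v w) => [->|vw] /=; first by rewrite wA /= cw0 ?setU11 // !mulr0 oppr0 mulr0.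
case: (boolP (v \in A)) => vA //=.
have vB : v \notin B by rewrite !inE negb_and vA orbT.
rewrite ffunE !inE wA orbT.
have -> : (v |: A) :\ w = v |: B.
  by rewrite [in LHS]AB setUCA setU1K // in_setU1 negb_or eq_sym vw.
by rewrite mulrA mulrN mulrA -mulNr [in LHS]AB -bsign_swap 1?eq_sym // (mulrC (bsign _ w)).
Qed.

Lemma deletion_join_link w z : z = deletion w z + join w (link w z).
Proof.
apply/ffunP=> A; rewrite !ffunE; case: ifP => wA; last by rewrite addr0.
by rewrite add0r !inE eqxx /= setD1K // mulrA bsign_sqr mul1r.
Qed.

Lemma boundary_link_deletion w z : boundary z = 0 ->
  boundary (link w z) = 0 /\ boundary (deletion w z) = - link w z.
Proof.
move=> bz.
have link_w A : w \in A -> link w z A = 0 by move=> wA; rewrite ffunE wA.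
have E : boundary (deletion w z) + (link w z - join w (boundary (link w z))) = 0.
  by rewrite -boundary_join // -boundaryD -deletion_join_link.
have blink : boundary (link w z) = 0.
  apply/ffunP=> B; rewrite [RHS]ffunE.
  case: (boolP (w \in B)) => wB.
    by rewrite ffunE big1 // => v _; rewrite link_w ?mulr0 // in_setU1 wB orbT.
  have /eqP := congr1 (fun f : {ffun {set T} -> F} => f (w |: B)) E.
  rewrite !ffunE setU11 setU1K // big1 => [|v _]; last by rewrite ffunE setU1r ?setU11 ?mulr0.
  by rewrite add0r sub0r oppr_eq0 mulf_eq0 (negbTE (bsign_neq0 _ _)) => /eqP.
by split=> //; apply/eqP; rewrite -addr_eq0; move: E; rewrite blink join0 subr0 => ->.
Qed.

End Chains.

Section Homology.
Variables (F : fieldType) (T : finType) (e : rel T).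
Hypotheses (e_sym : symmetric e) (e_irr : irreflexive e).
Implicit Types (A B S V W : {set T}) (u w x : T) (c z : {ffun {set T} -> F}).

Local Notation boundary := (@boundary F T).

Definition chain_on W (k : int) c : Prop :=
  forall A, ~~ (face_dim e k A && (A \subset W)) -> c A = 0.

(* Chains supported in [W] are the chains of ind(G[W]). *)
Definition homology_vanishes_on W (k : int) : Prop :=
  forall z, chain_on W k z -> boundary z = 0 ->
    exists c, chain_on W (k + 1) c /\ boundary c = z.

Definition nbh w : {set T} := w |: [set x | e w x].

Lemma chain_onP W k c A : chain_on W k c -> c A != 0 -> face_dim e k A /\ A \subset W.
Proof. by move=> cW cA; apply/andP; apply: contraNT cA => /cW ->. Qed.

Lemma chain_on_sub W V k c : W \subset V -> chain_on W k c -> chain_on V k c.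
Proof.
move=> WV cW A; apply: contraNeq => /(chain_onP cW) [-> AW].
exact: subset_trans AW WV.
Qed.

Lemma chain_onD W k c z : chain_on W k c -> chain_on W k z -> chain_on W k (c + z).
Proof. by move=> cW zW A AW; rewrite ffunE cW // zW // addr0. Qed.

Lemma chain_onN W k c : chain_on W k c -> chain_on W k (- c).
Proof. by move=> cW A AW; rewrite ffunE cW // oppr0. Qed.

Lemma independent_sub A B : A \subset B -> independent e B -> independent e A.
Proof.
move=> AB /forall_inP indB; apply/forall_inP => x xA; apply/forall_inP => y yA.
by have /forall_inP := indB x (subsetP AB x xA); apply; apply: (subsetP AB).
Qed.

Lemma chain_on_deletion W k w z : chain_on W k z -> chain_on (W :\ w) k (deletion w z).
Proof.
move=> zW A; apply: contraNeq; rewrite ffunE; case: ifP => [|wA]; first by rewrite eqxx.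
move/(chain_onP zW) => [-> AW]; apply/subsetP => x xA.
by rewrite !inE (subsetP AW) // andbT; apply: contraFN wA => /eqP <-.
Qed.

Lemma chain_on_link W k w z : chain_on W k z -> chain_on (W :\: nbh w) (k - 1) (link w z).
Proof.
move=> zW B; apply: contraNeq; rewrite ffunE; case: ifP => [|wB]; first by rewrite eqxx.
rewrite mulf_eq0 negb_or => /andP[_] /(chain_onP zW) [/andP[ind /eqP sz] sW].
rewrite /face_dim (independent_sub (subsetUr _ _) ind) /=; apply/andP; split.
  by move: sz; rewrite cardsU1 wB /= => sz; apply/eqP; lia.
apply/subsetP => x xB; rewrite !inE (subsetP sW) ?andbT ?setU1r //.
have xw : x != w by apply: contraFN wB => /eqP <-.
move/forall_inP: ind => /(_ w (setU11 _ _)) /forall_inP /(_ x (setU1r _ xB)).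
by rewrite (negbTE xw) => /negbTE ->.
Qed.

Lemma chain_on_join W V k w c : w \in W -> V \subset W -> w \notin V ->
  {in V, forall x, ~~ e w x} -> chain_on V k c -> chain_on W (k + 1) (join w c).
Proof.
move=> wW VW wV Vw cV A; apply: contraNeq; rewrite ffunE; case: ifP => wA; last by rewrite eqxx.
rewrite mulf_eq0 negb_or => /andP[_] /(chain_onP cV) [/andP[ind /eqP sz] sV].
have -> : A = w |: (A :\ w) by rewrite setD1K.
set B := A :\ w in ind sz sV *; have wB : w \notin B by rewrite !inE eqxx.
have nwB y : y \in B -> ~~ e w y && ~~ e y w.
  by move=> /(subsetP sV) /Vw; rewrite e_sym andbb.
rewrite /face_dim cardsU1 wB -andbA; apply/and3P; split.
- apply/forall_inP => x; rewrite in_setU1 => /orP[/eqP ->|xB];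
  apply/forall_inP => y; rewrite in_setU1 => /orP[/eqP ->|yB].
  + by rewrite e_irr.
  + by case/andP: (nwB y yB).
  + by case/andP: (nwB x xB).
  + by move/forall_inP: ind => /(_ x xB) /forall_inP /(_ y yB).
- by apply/eqP; lia.
- by rewrite subUset sub1set wW (subset_trans sV VW).
Qed.

Lemma homology_vanishes_on_lt0 W k : k + 1 < 0 -> homology_vanishes_on W k.
Proof.
move=> kn z zW bz; exists 0; split; first by move=> A _; rewrite ffunE.
rewrite boundary0; apply/ffunP => A; rewrite ffunE; symmetry; apply: zW.
by rewrite /face_dim; apply/negP => /andP[/andP[_ /eqP h] _]; lia.
Qed.

Lemma homology_vanishes_on_cone W u k : u \in W -> {in W, forall x, ~~ e u x} ->
  homology_vanishes_on W k.
Proof.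
move=> uW uW0 z zW bz; have [_ bdel] := boundary_link_deletion u bz.
exists (join u (deletion u z)); split.
  apply: (chain_on_join uW (subsetDl W [set u])); first by rewrite !inE eqxx.
  - by move=> x /setD1P[_]; apply: uW0.
  - exact: chain_on_deletion.
rewrite boundary_join => [|A uA]; last by rewrite ffunE uA.
rewrite bdel [RHS](deletion_join_link u); congr (_ + _); apply/ffunP => A.
by rewrite !ffunE; case: ifP; rewrite ?ffunE ?mulrN ?opprK ?oppr0.
Qed.

(* Chain-level form of the long exact sequence of the pair (ind(G[W]), ind(G[W - w])). *)
Lemma homology_vanishes_on_split W w k : w \in W ->
  homology_vanishes_on (W :\ w) k -> homology_vanishes_on (W :\: nbh w) (k - 1) ->
  homology_vanishes_on W k.
Proof.
move=> wW hdel hlink z zW bz.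
have [blink bdel] := boundary_link_deletion w bz.
have [c1 [c1W bc1]] := hlink _ (chain_on_link (w := w) zW) blink.
rewrite subrK in c1W.
have c1w A : w \in A -> c1 A = 0.
  move=> wA; apply/eqP; apply: contraT => /(chain_onP c1W) [_ /subsetP sA].
  by have := sA w wA; rewrite !inE eqxx.
have zW' : chain_on (W :\ w) k (deletion w z + c1).
  apply: chain_onD; first exact: chain_on_deletion.
  by apply: chain_on_sub c1W; apply: setDS; rewrite sub1set setU11.
have bz' : boundary (deletion w z + c1) = 0 by rewrite boundaryD bdel bc1 addNr.
have [c2 [c2W bc2]] := hdel _ zW' bz'.
exists (c2 - join w c1); split.
  apply: chain_onD; first by apply: chain_on_sub c2W; apply: subsetDl.
  apply/chain_onN/(chain_on_join wW (subsetDl _ _) _ _ c1W).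
    by rewrite !inE eqxx.
  by move=> x; rewrite !inE negb_or => /andP[/andP[_ ->]].
rewrite boundaryD boundaryN bc2 boundary_join // bc1 opprB -addrA [c1 + _]addrC subrK.
by rewrite [RHS](deletion_join_link w).
Qed.

(* [S] contains the neighbours of [u] in [W]; deleting [S] in the order given by [r], each
   deletion loses at most [D] vertices in the link, and afterwards [u] is isolated. *)
Definition peeling (D : nat) W u (r : T -> nat) S : Prop :=
  [/\ u \in W, S \subset W :\ u, {in W :\: S, forall x, ~~ e u x},
      {in S &, injective r} &
      {in S, forall w, #|W :&: ([set x in S | r x < r w] :|: nbh w)| <= D}%N].

Lemma homology_vanishes_on_peeling D W u r S k : peeling D W u r S ->
  (forall V, k * D%:Z < #|V|%:Z -> homology_vanishes_on V (k - 1)) ->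
  (k + 1) * D%:Z < #|W|%:Z -> homology_vanishes_on W k.
Proof.
move=> [uW SW uS rinj Dbound] IH WD.
pose P n := [set x in S | (r x < n)%N].
suff hP d n : (\max_(x in S) (r x).+1 <= n + d)%N -> homology_vanishes_on (W :\: P n) k.
  have P0 : P 0%N = set0 by apply/setP => x; rewrite !inE andbF.
  by have := hP _ 0%N (leqnn _); rewrite P0 setD0.
elim: d n => [|d IHd] n.
  rewrite addn0 => maxS; have -> : P n = S.
    apply/setP => x; rewrite inE andb_idr // => xS.
    by apply: leq_trans maxS; apply: (leq_bigmax_cond (F := fun x => (r x).+1)).
  apply: (homology_vanishes_on_cone (u := u)) => //.
  by rewrite inE uW andbT; apply/negP => /(subsetP SW); rewrite !inE eqxx.
rewrite -addSnnS => maxS.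
case: (pickP [pred w in S | r w == n]) => [w /andP[wS /eqP rw]|none]; last first.
  have -> : P n = P n.+1.
    apply/setP => x; rewrite !inE ltnS [(r x <= n)%N]leq_eqVlt.
    by case: (boolP (x \in S)) => //= xS; have := none x; rewrite /= xS /= => ->.
  exact: IHd maxS.
have Pn1 : W :\: P n.+1 = (W :\: P n) :\ w.
  apply/setP => x; rewrite !inE ltnS [(r x <= n)%N]leq_eqVlt -rw.
  case: (eqVneq x w) => [->|xw]; first by rewrite wS eqxx.
  by case: (boolP (x \in S)) => //= xS; rewrite (inj_in_eq rinj) ?(negbTE xw).
apply: (homology_vanishes_on_split (w := w)).
- have /setD1P[_ wW] := subsetP SW w wS.
  by rewrite !inE wW rw ltnn andbF.
- by rewrite -Pn1; exact: IHd maxS.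
- apply: IH; rewrite setDDl cardsD.
  have : (#|W :&: (P n :|: nbh w)| <= D)%N by rewrite -rw; apply: Dbound.
  have : (#|W :&: (P n :|: nbh w)| <= #|W|)%N by apply/subset_leq_card/subsetIl.
  lia.
Qed.

Lemma homology_vanishes_of_peeling D :
  (forall W, W != set0 -> exists u r S, peeling D W u r S) ->
  forall W k, (k + 1) * D%:Z < #|W|%:Z -> homology_vanishes_on W k.
Proof.
move=> hpeel W k; case: (ltrP (k + 1) 0) => [kn _|k0]; first exact: homology_vanishes_on_lt0.
have [n ->] : exists n : nat, k = n%:Z - 1 by exists (absz (k + 1)); lia.
elim: n W => [|n IHn] W; rewrite subrK => WD;
  have W0 : W != set0 by rewrite -card_gt0; lia.
all: have [u [r [S pW]]] := hpeel W W0.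
all: apply: (homology_vanishes_on_peeling pW) => [V VD|]; rewrite ?subrK //.
  by apply: homology_vanishes_on_lt0.
by rewrite -addn1 PoszD addrK in VD *; apply: IHn; rewrite subrK.
Qed.

End Homology.

Section Lattice.
Variable l : nat.
Implicit Types (a b : 'rV[int]_l) (i j : 'I_l).

Definition shift a i (s : int) : 'rV[int]_l := \row_j (a 0 j + (if j == i then s else 0)).

Definition sgn (b : bool) : int := if b then 1 else -1.

Definition dir a b : option ('I_l * bool) := [pick ij | b == shift a ij.1 (sgn ij.2)].

(* The coefficients [l - i] are positive and pairwise distinct, so a vertex of maximal weight has
   no neighbour above it, and going down along [e_i] then up along [e_j], [j < i], gains weight. *)
Definition weight a : int := \sum_(i < l) (l - i)%:Z * a 0 i.

Lemma lattice_adjP a b : lattice_adj a b -> exists i s, b = shift a i (sgn s).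
Proof.
rewrite /lattice_adj => /eqP H.
have [i di|d0] := pickP (fun j => a 0 j - b 0 j != 0); last first.
  move: H; rewrite big1 // => j _.
  by have /negbFE/eqP -> := d0 j; rewrite expr0n.
have sqr_diff_ge0 j : 0 <= (a 0 j - b 0 j) ^+ 2 by apply: sqr_ge0.
move: H; rewrite (bigD1 i) //=; set r := \sum_(j | j != i) _ => H.
have r0 : 0 <= r by apply: sumr_ge0.
have di1 : 1 <= (a 0 i - b 0 i) ^+ 2 by rewrite expr2; move: di; nia.
have dj0 j : j != i -> a 0 j - b 0 j = 0.
  move=> ji; have /eqP : r = 0 by lia.
  rewrite psumr_eq0 // => /allP /(_ j (mem_index_enum _)).
  by rewrite ji sqrf_eq0 => /eqP.
have di2 : (a 0 i - b 0 i) ^+ 2 = 1 by lia.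
have [s hs] : exists s, b 0 i = a 0 i + sgn s.
  move: di2; rewrite expr2 => di2.
  by case: (ltrP (a 0 i) (b 0 i)) => h; [exists true | exists false]; rewrite /sgn; nia.
exists i, s; apply/rowP => j; rewrite mxE.
by case: (eqVneq j i) => [->|ji] //; have := dj0 j ji; lia.
Qed.

Lemma lattice_adj_irr a : ~~ lattice_adj a a.
Proof. by rewrite /lattice_adj big1 // => j _; rewrite subrr expr0n. Qed.

Lemma shift_inj a i j s t : shift a i (sgn s) = shift a j (sgn t) -> i = j /\ s = t.
Proof.
move/rowP => /(_ i); rewrite !mxE eqxx.
by case: (eqVneq i j) => [<-|_]; case: s; case: t; rewrite /sgn => // h; exfalso; lia.
Qed.

Lemma shift_neq a i s : shift a i (sgn s) != a.
Proof.
apply/eqP => /rowP /(_ i); rewrite mxE eqxx -[X in _ = X]addr0 => /addrI.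
by case: s => /eqP; rewrite ?oppr_eq0 oner_eq0.
Qed.

Lemma dir_some a b ij : dir a b = Some ij -> b = shift a ij.1 (sgn ij.2).
Proof. by rewrite /dir; case: pickP => // x /eqP -> [<-]. Qed.

Lemma dir_shift a i s : dir a (shift a i (sgn s)) = Some (i, s).
Proof.
rewrite /dir; case: pickP => [[j t] /= /eqP /shift_inj [<- <-] //|].
by move/(_ (i, s)); rewrite eqxx.
Qed.

Lemma weight_shift a i s : weight (shift a i s) = weight a + (l - i)%:Z * s.
Proof.
rewrite /weight (bigD1 i) //= [in RHS](bigD1 i) //= !mxE eqxx mulrDr -!addrA; congr (_ + _).
rewrite addrC; congr (_ + _); apply: eq_bigr => j /negbTE ji.
by rewrite mxE ji addr0.
Qed.

Lemma weight_shift_down_up a i j : (j < i)%N -> weight a < weight (shift (shift a i (-1)) j 1).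
Proof. by move=> ji; rewrite !weight_shift; have := ltn_ord i; lia. Qed.

End Lattice.

Section LatticeGraph.
Variables (l : nat) (T : finType) (p : T -> 'rV[int]_l) (e : rel T).
Hypotheses (p_inj : injective p) (e_lattice : forall x y, e x y -> lattice_adj (p x) (p y)).
Implicit Types (W : {set T}) (u w x y : T).

Lemma lattice_graph_irr : irreflexive e.
Proof. by move=> x; apply/negP => /e_lattice; apply/negP/lattice_adj_irr. Qed.

Definition down_nbrs W u : {set T} :=
  [set x in W | [exists j, p x == shift (p u) j (-1)]].

Definition down_rank u x : nat := if dir (p u) (p x) is Some ij then val ij.1 else 0%N.

Lemma down_nbrsP W u x : x \in down_nbrs W u ->
  exists j, [/\ x \in W, p x = shift (p u) j (-1), dir (p u) (p x) = Some (j, false)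
             & down_rank u x = j].
Proof.
rewrite inE => /andP[xW /existsP[j /eqP pj]].
have dj : dir (p u) (p x) = Some (j, false) by rewrite pj (dir_shift _ _ false).
by exists j; rewrite /down_rank dj.
Qed.

Section MaximalWeight.
Variables (W : {set T}) (u : T).
Hypothesis u_max : {in W, forall x, weight (p x) <= weight (p u)}.

Lemma no_up_nbr x i : x \in W -> p x != shift (p u) i 1.
Proof.
move=> xW; apply/eqP => pxi; have := u_max xW.
by rewrite pxi weight_shift; have := ltn_ord i; lia.
Qed.

(* Code each vertex of the removed prefix by the direction [+e_j] from [w] it "blocks",
   and each other vertex of [N[w]] by its own direction from [w]; maximality of the weight
   of [u] says that the blocked positions are not in [W]. *)
Lemma card_prefix_nbh w : w \in down_nbrs W u ->
  (#|W :&: ([set x in down_nbrs W u | down_rank u x < down_rank u w] :|: nbh e w)|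
     <= 2 * l + 1)%N.
Proof.
move=> /down_nbrsP [jw [_ pw _ rw]]; rewrite rw.
set P := [set x in _ | _]; set X := W :&: _.
pose code x := if x \in P then omap (fun ij => (ij.1, true)) (dir (p u) (p x))
               else dir (p w) (p x).
have codeP x : x \in P -> exists j : 'I_l,
    [/\ (j < jw)%N, p x = shift (p u) j (-1) & code x = Some (j, true)].
  move=> xP; have := xP; rewrite inE => /andP[/down_nbrsP[j [_ pj dj ->]] jjw].
  by exists j; rewrite /code xP dj.
have codeN x : x \in X -> x \notin P -> code x = dir (p w) (p x) /\ (x = w \/ e w x).
  move=> /setIP[_ /setUP[-> //|]] + xP; rewrite /code (negbTE xP) !inE.
  by case/orP => [/eqP|]; split=> //; [left|right].
suff code_inj : {in X &, injective code}.
  rewrite -(card_in_imset code_inj); apply: leq_trans (max_card _) _.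
  by rewrite card_option card_prod card_ord card_bool; lia.
have cross x y : x \in P -> y \in X -> y \notin P -> code x != code y.
  move=> xP yX yP; have [j [jjw _ ->]] := codeP x xP; have [-> _] := codeN y yX yP.
  apply/eqP => /esym/dir_some; rewrite pw /= => py.
  have /setIP[yW _] := yX; have := u_max yW.
  by rewrite py; apply/negP; rewrite -ltNge; apply: weight_shift_down_up.
move=> x y xX yX; case: (boolP (x \in P)) => xP; case: (boolP (y \in P)) => yP.
- have [j [_ pj ->]] := codeP x xP; have [j' [_ pj' ->]] := codeP y yP.
  by case=> jj'; apply: p_inj; rewrite pj pj' jj'.
- by move/eqP; rewrite (negbTE (cross x y xP yX yP)).
- by move/esym/eqP; rewrite (negbTE (cross y x yP xX xP)).
have codeW z : z \in X -> z \notin P -> code z = None -> z = w.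
  move=> zX zP; have [-> [//|/e_lattice/lattice_adjP[i [t ->]]]] := codeN z zX zP.
  by rewrite dir_shift.
have [cx _] := codeN x xX xP; have [cy _] := codeN y yX yP.
case dx: (code x) => [ij|] dy; last by rewrite (codeW x xX xP dx) (codeW y yX yP (esym dy)).
apply: p_inj; rewrite (dir_some (etrans (esym cx) dx)).
by rewrite (dir_some (etrans (esym cy) (esym dy))).
Qed.

End MaximalWeight.

Lemma lattice_peeling W : W != set0 ->
  exists u r S, peeling e (2 * l + 1) W u r S.
Proof.
case/set0Pn => u0 u0W.
have [u uW u_max] := arg_maxP (fun x => weight (p x)) u0W.
exists u, (down_rank u), (down_nbrs W u); split=> //.
- apply/subsetP => x /down_nbrsP[j [xW pj _ _]]; rewrite !inE xW andbT.
  by apply: contra_neq (shift_neq (p u) j false) => xu; rewrite -pj xu.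
- move=> x /setDP[xW xS]; apply/negP => /e_lattice/lattice_adjP[j [[] pj]].
    by have /eqP := no_up_nbr u_max j xW.
  by move: xS; rewrite inE xW; case/existsP; exists j; rewrite pj.
- move=> x y /down_nbrsP[j [_ pj _ ->]] /down_nbrsP[j' [_ pj' _ ->]] /val_inj jj'.
  by apply: p_inj; rewrite pj pj' jj'.
- by move=> w; apply: card_prefix_nbh.
Qed.

End LatticeGraph.

Lemma homology_vanishes_onT (F : fieldType) (T : finType) (e : rel T) k :
  homology_vanishes_on F e [set: T] k -> reduced_homology_vanishes F e k.
Proof.
have chainT j c : chain_on e [set: T] j c <-> chain e j c.
  split=> cT A; first by move=> fA; apply: cT; rewrite subsetT andbT.
  by rewrite subsetT andbT; apply: cT.
move=> hT z /chainT zT bz; have [c [/chainT cT bc]] := hT z zT bz.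
by exists c.
Qed.

Theorem corollary6p14 (F : fieldType) (l : nat) (T : finType)
    (p : T -> 'rV[int]_l) (e : rel T) :
  (0 < l)%N ->
  injective p ->
  symmetric e ->
  (forall x y, e x y -> lattice_adj (p x) (p y)) ->
  forall k : int,
    (k%:~R : rat) < (#|T|%:R / (2 * l + 1)%:R) - 1 ->
    reduced_homology_vanishes F e k.
Proof.
move=> _ p_inj e_sym e_lattice k hk; apply: homology_vanishes_onT.
apply: (homology_vanishes_of_peeling e_sym (lattice_graph_irr e_lattice)).
  exact: (lattice_peeling p_inj e_lattice).
rewrite cardsT -(ltr_int rat) intrM intrD.
by move: hk; rewrite ltrBrDr ltr_pdivlMr ?ltr0n ?addn1.
Qed.
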